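(* Let $m$ be a positive integer and let $Q_1,\dots,Q_m$ be the partition of $\{0,1,\dots,m+1\}^3$ given by $(x,y,z)\in Q_i \iff f(x,y,z)=i$, where $f$ is defined below. Then for every $1\le i<j\le m$ and every unit vector $v\in\mathbb{Z}^3$ parallel to a coordinate axis, the sets $Q_i+(m+2)v$ and $Q_j$ are adjacent (i.e. the partition is externally adjacent).
   Context: Define $f:\{0,\dots,m+1\}^3\to\{1,\dots,m\}$ by: $f(x,y,z)=y$ if $0\le x\le m$, $1\le y\le m$, $z=0$; $f(x,y,z)=x$ if $1\le x\le m$, $0\le y\le m$, $z=m+1$; $f(x,y,z)=y$ if $x=0$, $1\le y\le m$, $1\le z\le m$; $f(x,y,z)=x$ if $1\le x\le m$, $y=0$, $1\le z\le m$; $f(x,y,z)=z$ if $1\le x\le m+1$, $1\le y\le m+1$, $1\le z\le m$; and $f(x,y,z)=1$ for all remaining points. Two disjoint sets $P,Q\subset\mathbb{Z}^3$ are adjacent if there exist $p\in P$, $q\in Q$ and a unit vector $v$ parallel to a coordinate axis with $p+v=q$. *)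

From Stdlib Require Import ZArith Lia Bool.
Open Scope Z_scope. Open Scope bool_scope.

Definition pt := (Z * Z * Z)%type.

Definition padd (p q : pt) : pt :=
  let '(a, b, c) := p in let '(d, e, g) := q in (a + d, b + e, c + g).

Definition pscale (k : Z) (p : pt) : pt :=
  let '(a, b, c) := p in (k * a, k * b, k * c).

Definition unit_axis (v : pt) : Prop :=
  v = (1, 0, 0) \/ v = (-1, 0, 0) \/ v = (0, 1, 0) \/ v = (0, -1, 0) \/
  v = (0, 0, 1) \/ v = (0, 0, -1).

Definition in_box (m : Z) (p : pt) : Prop :=
  let '(x, y, z) := p in
  0 <= x <= m + 1 /\ 0 <= y <= m + 1 /\ 0 <= z <= m + 1.

(* The function f of the paper (the five case domains are pairwise disjoint). *)
Definition f (m : Z) (p : pt) : Z :=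
  let '(x, y, z) := p in
  if (0 <=? x) && (x <=? m) && (1 <=? y) && (y <=? m) && (z =? 0) then y
  else if (1 <=? x) && (x <=? m) && (0 <=? y) && (y <=? m) && (z =? m + 1) then x
  else if (x =? 0) && (1 <=? y) && (y <=? m) && (1 <=? z) && (z <=? m) then y
  else if (1 <=? x) && (x <=? m) && (y =? 0) && (1 <=? z) && (z <=? m) then x
  else if (1 <=? x) && (x <=? m + 1) && (1 <=? y) && (y <=? m + 1)
          && (1 <=? z) && (z <=? m) then z
  else 1.

Definition Q (m i : Z) (p : pt) : Prop := in_box m p /\ f m p = i.

Definition translate (P : pt -> Prop) (w : pt) (p : pt) : Prop :=
  exists q, P q /\ p = padd q w.

Definition adjacent (P R : pt -> Prop) : Prop :=
  (forall p, P p -> R p -> False) /\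
  exists p q v, P p /\ R q /\ unit_axis v /\ padd p v = q.

(** Translating the box B = {0,...,m+1}^3 by (m+2)v puts it face to face
    with B: a point p on the face of B opposite to v is carried one step
    beyond the point p + (m+1)v of the face in direction v.  So it suffices
    to find, along some axis-parallel line crossing B, colour i at the back
    and colour j at the front.  The colouring f is built so that on each pair
    of opposite faces it reads off two different coordinates (y on x = 0 and
    z on x = m+1, x on z = m+1 and y on z = 0, ...), hence the line through
    the point with those two coordinates equal to i and j does the job, in
    either orientation. *)
From Stdlib Require Import ZArith Lia Bool.
Open Scope Z_scope.

Lemma triple_eq (a b c a' b' c' : Z) :
  a = a' -> b = b' -> c = c' -> (a, b, c) = (a', b', c').
Proof. intros -> -> ->; reflexivity. Qed.

Lemma padd_pscale_add (p v : pt) (a b : Z) :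
  padd (padd p (pscale a v)) (pscale b v) = padd p (pscale (a + b) v).
Proof.
  destruct p as [[x y] z], v as [[u w] t]; cbn.
  apply triple_eq; ring.
Qed.

Lemma unit_axis_opp (v : pt) : unit_axis v -> unit_axis (pscale (-1) v).
Proof.
  unfold unit_axis.
  intros [-> | [-> | [-> | [-> | [-> | ->]]]]]; cbn; tauto.
Qed.

Lemma in_box_translate_axis (m : Z) (p v : pt) :
  in_box m p -> unit_axis v -> ~ in_box m (padd p (pscale (m + 2) v)).
Proof.
  destruct p as [[x y] z].
  intros Hp [-> | [-> | [-> | [-> | [-> | ->]]]]]; cbn in *; lia.
Qed.

Lemma adjacent_across_box (m : Z) (P R : pt -> Prop) (v p q : pt) :
  (forall x, P x -> in_box m x) -> (forall x, R x -> in_box m x) ->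
  unit_axis v -> P p -> R q -> padd p (pscale (m + 1) v) = q ->
  adjacent (translate P (pscale (m + 2) v)) R.
Proof.
  intros HP HR Hv Pp Rq Hq; split.
  - intros x [x' [Px' ->]] Rx.
    exact (in_box_translate_axis m x' v (HP x' Px') Hv (HR _ Rx)).
  - exists (padd p (pscale (m + 2) v)), q, (pscale (-1) v).
    split; [exists p; split; trivial |].
    split; [exact Rq |].
    split; [exact (unit_axis_opp v Hv) |].
    rewrite padd_pscale_add, <- Hq.
    replace (m + 2 + -1) with (m + 1) by ring; reflexivity.
Qed.

Lemma Q_adjacent_across (m i j : Z) (v p q : pt) :
  unit_axis v -> Q m i p -> Q m j q -> padd p (pscale (m + 1) v) = q ->
  adjacent (translate (Q m i) (pscale (m + 2) v)) (Q m j).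
Proof. apply adjacent_across_box; intros x Hx; apply Hx. Qed.

(* Tests that lia cannot settle are left alone; in the cases below they only
   occur in conjunctions that already contain [false]. *)
Ltac compute_f :=
  unfold f; cbv beta iota;
  repeat match goal with
  | |- context[?a <=? ?b] =>
      first [ rewrite (proj2 (Z.leb_le a b)) by lia
            | rewrite (proj2 (Z.leb_gt a b)) by lia ]
  | |- context[?a =? ?b] =>
      first [ rewrite (proj2 (Z.eqb_eq a b)) by lia
            | rewrite (proj2 (Z.eqb_neq a b)) by lia ]
  end; rewrite ?andb_false_r; cbn.

Lemma Q_face_z0 (m x y : Z) : 0 <= x <= m -> 1 <= y <= m -> Q m y (x, y, 0).
Proof. intros; split; [cbn; lia | compute_f; lia]. Qed.

Lemma Q_face_zmax (m x y : Z) :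
  1 <= x <= m -> 0 <= y <= m -> Q m x (x, y, m + 1).
Proof. intros; split; [cbn; lia | compute_f; lia]. Qed.

Lemma Q_face_x0 (m y z : Z) : 1 <= y <= m -> 1 <= z <= m -> Q m y (0, y, z).
Proof. intros; split; [cbn; lia | compute_f; lia]. Qed.

Lemma Q_face_y0 (m x z : Z) : 1 <= x <= m -> 1 <= z <= m -> Q m x (x, 0, z).
Proof. intros; split; [cbn; lia | compute_f; lia]. Qed.

Lemma Q_layer (m x y z : Z) :
  1 <= x <= m + 1 -> 1 <= y <= m + 1 -> 1 <= z <= m -> Q m z (x, y, z).
Proof. intros; split; [cbn; lia | compute_f; lia]. Qed.

Theorem lemma2p2 (m : Z) (hm : 1 <= m) :
  forall i j : Z, 1 <= i -> i < j -> j <= m ->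
  forall v : pt, unit_axis v ->
    adjacent (translate (Q m i) (pscale (m + 2) v)) (Q m j).
Proof.
  intros i j Hi Hij Hj v Hv.
  destruct (Hv) as [-> | [-> | [-> | [-> | [-> | ->]]]]].
  - apply Q_adjacent_across with (p := (0, i, j)) (q := (m + 1, i, j));
      [exact Hv | apply Q_face_x0 | apply Q_layer | apply triple_eq]; lia.
  - apply Q_adjacent_across with (p := (m + 1, j, i)) (q := (0, j, i));
      [exact Hv | apply Q_layer | apply Q_face_x0 | apply triple_eq]; lia.
  - apply Q_adjacent_across with (p := (i, 0, j)) (q := (i, m + 1, j));
      [exact Hv | apply Q_face_y0 | apply Q_layer | apply triple_eq]; lia.
  - apply Q_adjacent_across with (p := (j, m + 1, i)) (q := (j, 0, i));
      [exact Hv | apply Q_layer | apply Q_face_y0 | apply triple_eq]; lia.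
  - apply Q_adjacent_across with (p := (j, i, 0)) (q := (j, i, m + 1));
      [exact Hv | apply Q_face_z0 | apply Q_face_zmax | apply triple_eq]; lia.
  - apply Q_adjacent_across with (p := (i, j, m + 1)) (q := (i, j, 0));
      [exact Hv | apply Q_face_zmax | apply Q_face_z0 | apply triple_eq]; lia.
Qed.
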